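(* For every prime $p$, $\operatorname{rank}_{\mathbb Z}K(C_p\times C_p,C_p)=p^2$.
   Context: For $K\le G=C_p\times C_p$ and a homomorphism $\rho:K\to C_p$, $K\times\rho=\{(k,\rho(k))\}\le G\times C_p$. $B(G,C_p)$ is the subgroup of the Burnside ring $B(G\times C_p)$ (free on the subgroups of $G\times C_p$) spanned by graphs. $K(G\times C_p)$ is the kernel of $B(G\times C_p)\to R_{\mathbb Q}(G\times C_p)$, $S\mapsto[\mathbb Q[(G\times C_p)/S]]$, and $K(G,C_p)=K(G\times C_p)\cap B(G,C_p)$. *)

From HB Require Import structures.
From mathcomp Require Import all_boot all_order all_algebra all_fingroup all_solvable all_field all_character.
Set Implicit Arguments. Unset Strict Implicit. Unset Printing Implicit Defensive.
Import GRing.Theory Num.Theory.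

(* C_p, realised as the additive group of 'Z_p (p prime, so p >= 2). *)
Definition Cp (p : nat) : finGroupType := [the finGroupType of 'Z_p].
Definition GG (p : nat) : finGroupType := [the finGroupType of (Cp p * Cp p)%type].
Definition GC (p : nat) : finGroupType := [the finGroupType of (GG p * Cp p)%type].

Definition graph_set (p : nat) (K : {group GG p}) (rho : GG p -> Cp p) : {set GC p} :=
  [set ((k, rho k) : GC p) | k in K].

Definition is_graph (p : nat) (S : {group GC p}) : Prop :=
  exists (K : {group GG p}) (rho : {morphism K >-> Cp p}),
    (S : {set GC p}) = graph_set K rho.

(* Elements of the Burnside ring B(G x C_p): Z-linear combinations of the
   subgroups of G x C_p (the group is abelian, so conjugacy classes of subgroups
   are subgroups).  The basis element S is the G x C_p-set (G x C_p)/S. *)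
Definition burnside (p : nat) := {ffun {group GC p} -> int}.

Definition in_BGC (p : nat) (x : burnside p) : Prop :=
  forall S : {group GC p}, ~ is_graph S -> x S = 0%R.

(* the character of the permutation module Q[(G x C_p)/S] (computed over algC),
   i.e. the induced trivial character. *)
Definition perm_char (p : nat) (S : {group GC p}) : 'CF([set: GC p]) :=
  ('Ind[[set: GC p], S] 1)%R.

(* image of x in R_Q(G x C_p), represented through characters *)
Definition to_RQ (p : nat) (x : burnside p) : 'CF([set: GC p]) :=
  (\sum_(S : {group GC p}) perm_char S *~ x S)%R.

(* membership in K(G, C_p) = K(G x C_p) /\ B(G, C_p) *)
Definition in_KGC (p : nat) (x : burnside p) : Prop :=
  in_BGC x /\ to_RQ x = 0%R.

Definition Z_independent (p n : nat) (v : 'I_n -> burnside p) : Prop :=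
  forall c : 'I_n -> int,
    (forall S : {group GC p}, (\sum_(i < n) c i * v i S)%R = 0%R) ->
    forall i, c i = 0%R.

Definition rank_KGC_eq (p r : nat) : Prop :=
  (exists v : 'I_r -> burnside p, (forall i, in_KGC (v i)) /\ Z_independent v) /\
  (forall (n : nat) (v : 'I_n -> burnside p),
      (forall i, in_KGC (v i)) -> Z_independent v -> n <= r).

From mathcomp Require Import all_boot all_order all_algebra all_fingroup all_solvable all_field all_character.
From mathcomp Require Import zify.
From Stdlib Require Import Classical_Prop.
Set Implicit Arguments. Unset Strict Implicit. Unset Printing Implicit Defensive.
Import GRing.Theory Num.Theory.

(* Every subgroup S of the abelian group G x C_p is normal, so the character of
   Q[(G x C_p)/S] is #|G x C_p : S| times the indicator of S, and x lies in
   K(G x C_p) iff sum_S x_S #|G x C_p : S| [h in S] = 0 for every h.  A graph has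
   order 1, p or p^2, and those of order p^2 are the p^2 graphs T_(a,b) of the
   homomorphisms (k1, k2) |-> a k1 + b k2 on all of G.  An element of K(G, C_p)
   vanishing at every T_(a,b) vanishes: the equation at a nontrivial h of a
   graph L of order p involves only L, and then the equation at 1 involves only
   the trivial group.  Conversely, with N the number of subgroups of order p of
   T = T_(a,b), the element p^2 T - p sum_(L < T, |L| = p) L + (N - 1) 1 lies in
   K(G, C_p) and has coefficient p^2 at T and 0 at every other T_(a',b'), so
   these p^2 elements are independent. *)

Lemma expg_pair (aT bT : finGroupType) (u : aT) (v : bT) n :
  (((u, v) : aT * bT) ^+ n = (u ^+ n, v ^+ n))%g.
Proof. by elim: n => // n IHn; rewrite !expgS IHn. Qed.

Lemma sum_bool_card (I : finType) (A : {pred I}) (P : pred I) :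
  (\sum_(i in A) P i = #|[set i in A | P i]|)%N.
Proof.
rewrite -sum1_card big_mkcond [RHS]big_mkcond; apply: eq_bigr => i _.
by rewrite inE; case: (i \in A); case: (P i).
Qed.

Lemma sum_boolM (I : finType) (P : pred I) (F : I -> int) :
  (\sum_i (P i)%:Z * F i = \sum_(i | P i) F i)%R.
Proof. by rewrite [RHS]big_mkcond; apply: eq_bigr => i _; case: (P i); rewrite ?mul1r ?mul0r. Qed.

Section IntIndependence.
Local Open Scope ring_scope.

Lemma int_independent_card_le (I : finType) n (w : 'I_n -> I -> int) :
  (forall c : 'I_n -> int, (forall j, \sum_i c i * w i j = 0) -> forall i, c i = 0) ->
  (n <= #|I|)%N.
Proof.
move=> w_free.
pose M : 'M[rat]_(n, #|I|) := \matrix_(i, j) (w i (enum_val j))%:~R.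
suff : row_free M by rewrite -row_leq_rank => /leq_trans; apply; apply: rank_leq_col.
rewrite -kermx_eq0; apply/negPn/negP => /matrix0Pn [i0 [j0 nz_u]].
pose u := row i0 (kermx M).
have uM : u *m M = 0 by rewrite /u -row_mul mulmx_ker row0.
pose den := \prod_k denq (u 0 k).
(* [c] is [u] with its denominators cleared. *)
pose c i := numq (u 0 i) * \prod_(k | k != i) denq (u 0 k).
have cE i : (c i)%:~R = u 0 i * den%:~R :> rat.
  by rewrite /c /den [in RHS](bigD1 i) //= !intrM numqE mulrA.
have c_ker j : \sum_i c i * w i j = 0.
  apply/eqP; rewrite -(intr_eq0 rat) rmorph_sum /=.
  have /(congr1 (fun m : 'rV_#|I| => m 0 (enum_rank j))) := uM.
  rewrite !mxE => u_col.
  under eq_bigr do rewrite intrM cE mulrAC.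
  rewrite -mulr_suml (eq_bigr (fun i => u 0 i * M i (enum_rank j))) ?u_col ?mul0r //.
  by move=> i _; rewrite [M _ _]mxE enum_rankK.
have /eqP := w_free c c_ker j0.
rewrite -(intr_eq0 rat) cE mulf_eq0 intr_eq0 mxE (negbTE nz_u) /=.
by apply/negP/prodf_neq0 => k _; apply: denq_neq0.
Qed.
End IntIndependence.

Lemma in_KGC_lincomb p n (v : 'I_n -> burnside p) (c : 'I_n -> int) :
  (forall i, in_KGC (v i)) -> in_KGC [ffun S => \sum_i c i * v i S]%R.
Proof.
move=> vK; split=> [S nS | ].
  by rewrite ffunE big1 // => i _; rewrite (vK i).1 // mulr0.
rewrite /to_RQ; under eq_bigr do rewrite ffunE mulrz_sumr.
rewrite exchange_big big1 //= => i _.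
under eq_bigr do rewrite mulrC mulrzA.
by rewrite -mulrz_suml -/(to_RQ (v i)) (vK i).2 mul0rz.
Qed.

Lemma rank_KGC_eq_dual p (I : finType) (T : I -> {group GC p})
    (kappa : I -> burnside p) (d : int) :
  d != 0%R -> (forall i, in_KGC (kappa i)) ->
  (forall i j, kappa i (T j) = d *+ (i == j))%R ->
  (forall x, in_KGC x -> (forall i, x (T i) = 0%R) -> forall S, x S = 0%R) ->
  rank_KGC_eq p #|I|.
Proof.
move=> d_nz kappaK kappaT K_inj; split.
  exists (fun k => kappa (enum_val k)); split=> [k | c c0 k]; first exact: kappaK.
  have := c0 (T (enum_val k)); rewrite (bigD1 k) //= big1 => [|l neq_lk].
    by rewrite kappaT eqxx mulr1n addr0 => /eqP; rewrite mulf_eq0 (negbTE d_nz) orbF => /eqP.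
  by rewrite kappaT (inj_eq enum_val_inj) (negbTE neq_lk) mulr0.
move=> n v vK v_free; apply: (int_independent_card_le (w := fun i j => v i (T j))).
move=> c c0 i; apply: v_free => S.
have := K_inj _ (in_KGC_lincomb c vK) _ S; rewrite ffunE; apply=> j.
by rewrite ffunE c0.
Qed.

Section ElementaryAbelian.
Variable p : nat.

Lemma graph_group_set (K : {group GG p}) (rho : {morphism K >-> Cp p}) :
  group_set (graph_set K rho).
Proof.
apply/group_setP; split; first by apply/imsetP; exists 1%g; rewrite ?morph1.
move=> _ _ /imsetP[k kK ->] /imsetP[l lK ->].
by apply/imsetP; exists (k * l)%g; rewrite ?groupM ?morphM.
Qed.

Definition graph_group (K : {group GG p}) (rho : {morphism K >-> Cp p}) :=
  Group (graph_group_set rho).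

Lemma card_graph_set (K : {group GG p}) (rho : {morphism K >-> Cp p}) :
  #|graph_set K rho| = #|K|.
Proof. by rewrite card_imset // => k l [->]. Qed.

Lemma sub_graph_is_graph (K : {group GG p}) (rho : {morphism K >-> Cp p})
    (S : {group GC p}) :
  S \subset graph_set K rho -> is_graph S.
Proof.
move=> sSK.
have KS_group : group_set (K :&: [set k | ((k, rho k) : GC p) \in S]).
  apply/group_setP; split; first by rewrite !inE group1 morph1 group1.
  move=> k l; rewrite !inE => /andP[kK kS] /andP[lK lS].
  by rewrite groupM // morphM //; apply: (groupM kS lS).
pose KS := Group KS_group.
exists KS, (restrm (subsetIl K _ : KS \subset K) rho).
apply/setP => g; apply/idP/imsetP => [gS | [k]]; last by rewrite !inE => /andP[_ kS] ->.
have /imsetP[k kK gE] := subsetP sSK g gS.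
by exists k; rewrite // !inE kK -gE.
Qed.

Definition linear_form (a b : 'Z_p) (k : GG p) : Cp p :=
  (a * (k.1 : 'Z_p) + b * (k.2 : 'Z_p))%R.

Lemma linear_form_morphM a b :
  {in [set: GG p] &, {morph linear_form a b : k l / (k * l)%g >-> (k * l)%g}}.
Proof. by move=> k l _ _; rewrite /linear_form /= !mulrDr addrACA. Qed.

Definition linear_morph a b : {morphism [set: GG p] >-> Cp p} :=
  Morphism (@linear_form_morphM a b).

Definition graphT a b : {group GC p} := graph_group (linear_morph a b).

Lemma mem_graph_set (K : {group GG p}) (rho : {morphism K >-> Cp p}) k c :
  (((k, c) : GC p) \in graph_set K rho) = (k \in K) && (c == rho k).
Proof.
apply/imsetP/andP => [[l lK [-> ->]] // | [kK /eqP ->]].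
by exists k.
Qed.

Lemma mem_graphT a b k c : (((k, c) : GC p) \in graphT a b) = (c == linear_form a b k).
Proof. by rewrite mem_graph_set inE. Qed.

Lemma Zp_expgE (x : Cp p) (k : 'Z_p) : (x ^+ k)%g = (x * k)%R :> 'Z_p.
Proof. by rewrite Zp_expg; apply: val_inj. Qed.

Lemma morph_linear_form (K : {group GG p}) (rho : {morphism K >-> Cp p}) :
  [set: GG p] \subset K ->
  forall k, rho k = linear_form (rho (1%R, 0%R)) (rho (0%R, 1%R)) k.
Proof.
move=> /subsetP KT [k1 k2]; have inK l : l \in K by apply: KT; rewrite inE.
have E : ((k1, k2) : GG p) = (((1%R, 0%R) : GG p) ^+ k1 * ((0%R, 1%R) : GG p) ^+ k2)%g.
  rewrite !expg_pair !Zp_expgE !mul0r !mul1r.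
  by change ((k1, k2) = ((k1 * 1)%g, (1 * k2)%g)); rewrite mulg1 mul1g.
by rewrite {1}E morphM ?inK // !morphX ?inK // !Zp_expgE.
Qed.

Hypothesis p_pr : prime p.

Lemma card_Cp : #|Cp p| = p.
Proof. by rewrite card_ord Zp_cast ?prime_gt1. Qed.

Lemma card_GG : #|GG p| = (p ^ 2)%N.
Proof. by rewrite card_prod card_Cp. Qed.

Lemma card_GC : #|GC p| = (p ^ 3)%N.
Proof. by rewrite card_prod card_GG card_Cp -expnSr. Qed.

Lemma abelian_GC : abelian [set: GC p].
Proof.
apply/centsP => [[[x1 x2] x3]] _ [[y1 y2] y3] _.
have comm (u v : Cp p) : (u * v = v * u)%g by apply: (addrC (u : 'Z_p)).
change (((x1 * y1)%g, (x2 * y2)%g, (x3 * y3)%g) = ((y1 * x1)%g, (y2 * x2)%g, (y3 * x3)%g)).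
by rewrite comm (comm x2) (comm x3).
Qed.

Lemma index_GC (S : {group GC p}) k :
  #|S| = (p ^ k)%N -> k <= 3 -> #|[set: GC p] : S|%g = (p ^ (3 - k))%N.
Proof.
move=> cardS le_k3; apply/eqP.
rewrite -(eqn_pmul2l (_ : 0 < p ^ k)) ?expn_gt0 ?prime_gt0 // -expnD subnKC // -cardS.
by rewrite Lagrange ?subsetT // cardsT card_GC.
Qed.

(* The number of cosets of S fixed by h, i.e. the value of perm_char S at h. *)
Definition fixed_cosets (S : {group GC p}) (h : GC p) : nat :=
  #|[set: GC p] : S|%g * (h \in S).

Lemma to_RQE (x : burnside p) h :
  to_RQ x h = ((\sum_S x S * (fixed_cosets S h)%:Z)%:~R)%R.
Proof.
rewrite /to_RQ sum_cfunE rmorph_sum; apply: eq_bigr => S _.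
have S_normal : (S <| [set: GC p])%g by rewrite -sub_abelian_normal ?subsetT ?abelian_GC.
rewrite -scaler_int cfunE /perm_char (cfInd_cfun1 S_normal) cfunE cfuniE //.
by rewrite /fixed_cosets rmorphM /= PoszM rmorphM.
Qed.

Lemma to_RQ_eq0P (x : burnside p) :
  to_RQ x = 0%R <-> forall h, (\sum_S x S * (fixed_cosets S h)%:Z = 0)%R.
Proof.
split=> [x0 h | x0]; last by apply/cfunP => h; rewrite to_RQE x0 cfunE.
by apply/eqP; rewrite -(intr_eq0 algC) -to_RQE x0 cfunE.
Qed.

Lemma to_RQ_coef_eq0 (x : burnside p) (S : {group GC p}) h :
  to_RQ x = 0%R -> h \in S -> (forall S', S' != S -> h \in S' -> x S' = 0%R) ->
  x S = 0%R.
Proof.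
move=> /to_RQ_eq0P /(_ h) x0 hS xS'0; move: x0.
rewrite (bigD1 S) //= big1 => [|S' neS'S]; last first.
  case: (boolP (h \in S')) => hS'; first by rewrite xS'0 ?mul0r.
  by rewrite /fixed_cosets (negbTE hS') muln0 mulr0.
rewrite addr0 /fixed_cosets hS muln1 => /eqP; rewrite mulf_eq0 eqz_nat.
by rewrite eqn0Ngt indexg_gt0 orbF => /eqP.
Qed.

Lemma graph_cases (S : {group GC p}) : is_graph S ->
  [\/ #|S| = 1%N, #|S| = p | exists a b, S = graphT a b].
Proof.
case=> K [rho S_def]; rewrite S_def card_graph_set.
have : #|K| %| p ^ 2 by rewrite -card_GG -cardsT cardSg ?subsetT.
case/(dvdn_pfactor _ _ p_pr) => [[|[|[|m]]] // _ cardK]; rewrite cardK.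
- exact: Or31.
- exact: Or32.
have /eqP K_full : (K : {set GG p}) == [set: GG p].
  by rewrite eqEcard subsetT cardsT card_GG cardK leqnn.
apply: Or33; exists (rho (1%R, 0%R)), (rho (0%R, 1%R)); apply: val_inj => /=.
have KT : [set: GG p] \subset K by rewrite K_full.
apply/setP => -[k c]; rewrite S_def mem_graph_set mem_graphT (subsetP KT) ?inE //.
by rewrite -morph_linear_form.
Qed.

Lemma graphT_inj a b a' b' : graphT a b = graphT a' b' -> (a, b) = (a', b').
Proof.
move=> eq_ab; have mem k c : ((k, c) \in graphT a b) = ((k, c) \in graphT a' b').
  by rewrite eq_ab.
have := mem (1%R, 0%R) a; have := mem (0%R, 1%R) b.
rewrite !mem_graphT /linear_form /= !mulr1 !mulr0 !addr0 !add0r !eqxx.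
by move=> /esym/eqP -> /esym/eqP ->.
Qed.

Lemma expg_GC (g : GC p) : (g ^+ p)%g = 1%g.
Proof.
have expCp (u : Cp p) : (u ^+ p)%g = 1%g.
  by have := expg_cardG (in_setT u); rewrite cardsT card_Cp.
by case: g => [[u v] w]; rewrite !expg_pair !expCp.
Qed.

Lemma order_GC (g : GC p) : g != 1%g -> #[g]%g = p.
Proof.
move=> g_nt; have : #[g]%g %| p by rewrite order_dvdn expg_GC.
by case/(dvdn_pfactor _ 1 p_pr) => [[|[|//]]] // _ /eqP; rewrite order_eq1 (negbTE g_nt).
Qed.

Lemma order_p_group_cycle (L : {group GC p}) h :
  #|L| = p -> h \in L -> h != 1%g -> L = <[h]>%G.
Proof.
move=> cardL hL h_nt; apply: val_inj; apply/eqP => /=.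
by rewrite eq_sym eqEcard cycle_subG hL cardL /= -/#[h]%g order_GC.
Qed.

Lemma card1_group1 (S : {group GC p}) : #|S| = 1%N -> S = 1%G.
Proof. by move=> cardS; apply/val_inj/eqP; rewrite /= trivg_card1 cardS. Qed.

Lemma KGC_eq0 (x : burnside p) :
  in_KGC x -> (forall a b, x (graphT a b) = 0%R) -> forall S, x S = 0%R.
Proof.
case=> xB xR xT.
have supp (S : {group GC p}) : x S != 0%R -> #|S| = 1%N \/ #|S| = p.
  move=> xS_nz; have S_graph : is_graph S.
    by apply: NNPP => nS; move/eqP: xS_nz; apply; exact: xB.
  case: (graph_cases S_graph) => [| | [a [b S_ab]]]; [by left | by right |].
  by rewrite S_ab xT eqxx in xS_nz.
have x_p (S : {group GC p}) : #|S| = p -> x S = 0%R.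
  move=> cardS; have /trivgPn[g gS g_nt] : S :!=: 1%g.
    by rewrite trivg_card1 cardS; case: eqP (prime_gt1 p_pr) => // ->.
  apply: (to_RQ_coef_eq0 xR gS) => S' neS'S gS'.
  case: (eqVneq (x S') 0%R) => // /supp[/card1_group1 S'1 | cardS'].
    by rewrite S'1 inE (negbTE g_nt) in gS'.
  by rewrite (order_p_group_cycle cardS' gS' g_nt) -(order_p_group_cycle cardS gS g_nt) eqxx in neS'S.
have x_1 : x 1%G = 0%R.
  apply: (to_RQ_coef_eq0 xR (group1 _)) => S' neS'1 _.
  case: (eqVneq (x S') 0%R) => // /supp[/card1_group1 S'1 | /x_p //].
  by rewrite S'1 eqxx in neS'1.
by move=> S; case: (eqVneq (x S) 0%R) => // /supp[/card1_group1 -> | /x_p].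
Qed.

Definition subgroups_p (T : {group GC p}) : {set {group GC p}} :=
  [set L : {group GC p} | (L \subset T) && (#|L| == p)].

Lemma card_subgroups_p_mem (T : {group GC p}) h : h \in T -> h != 1%g ->
  #|[set L in subgroups_p T | h \in L]| = 1%N.
Proof.
move=> hT h_nt; apply/eqP/cards1P; exists <[h]>%G; apply/setP => L; rewrite !inE.
apply/idP/eqP => [/andP[/andP[_ /eqP cardL] hL] | ->]; first exact: order_p_group_cycle.
by rewrite cycle_subG hT cycle_id -/#[h]%g order_GC ?eqxx.
Qed.

Lemma card_graphT a b : #|graphT a b| = (p ^ 2)%N.
Proof. by rewrite card_graph_set cardsT card_GG. Qed.

(* The coefficient N - 1 at the trivial group balances the equation at h = 1
   without computing N = p + 1. *)
Definition kappa a b : burnside p :=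
  let T := graphT a b in
  [ffun S => (p ^ 2)%:Z * (S == T)%:Z - p%:Z * (S \in subgroups_p T)%:Z
             + (#|subgroups_p T|%:Z - 1) * (S == 1%G)%:Z]%R.

Lemma kappa_BGC a b : in_BGC (kappa a b).
Proof.
move=> S nS; have nST : ~~ (S \subset graphT a b) by apply/negP => /sub_graph_is_graph.
rewrite ffunE inE (negbTE nST) /=.
have -> : (S == graphT a b) = false by apply: contraNF nST => /eqP ->.
have -> : (S == 1%G) = false by apply: contraNF nST => /eqP ->; apply: sub1G.
by rewrite !mulr0 subr0 addr0.
Qed.

Lemma kappa_RQ a b : to_RQ (kappa a b) = 0%R.
Proof.
apply/to_RQ_eq0P => h; set T := graphT a b; set Ls := subgroups_p T.
pose w S : int := Posz (fixed_cosets S h).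
have -> : (\sum_S kappa a b S * w S = (p ^ 2)%:Z * w T - p%:Z * \sum_(L in Ls) w L
                                     + (#|Ls|%:Z - 1) * w 1%G)%R.
  under eq_bigr do rewrite ffunE !mulrDl mulNr -!mulrA.
  by rewrite !big_split /= sumrN -!mulr_sumr !sum_boolM !big_pred1_eq -mulrDl.
have wT : w T = Posz (p * (h \in T)) by rewrite /w /fixed_cosets (index_GC (card_graphT a b)).
have w1 : w 1%G = Posz (p ^ 3 * (h == 1%g)).
  by rewrite /w /fixed_cosets (index_GC (k := 0)) ?cards1 ?inE.
have wLs : (\sum_(L in Ls) w L = Posz (p ^ 2 * #|[set L in Ls | h \in L]|))%R.
  rewrite -sum_bool_card big_distrr /= -natz natr_sum; apply: eq_bigr => L.
  rewrite inE => /andP[_ /eqP cardL].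
  by rewrite natz /w /fixed_cosets (index_GC (k := 1)) ?expn1.
rewrite wT w1 wLs; case: (eqVneq h 1%g) => [-> | h_nt].
  have -> : [set L in Ls | 1%g \in L] = Ls by apply/setP => L; rewrite inE group1 andbT.
  by rewrite group1; nia.
case: (boolP (h \in T)) => hT; first by rewrite card_subgroups_p_mem //; nia.
suff -> : [set L in Ls | h \in L] = set0 by rewrite cards0; nia.
apply/setP => L; rewrite !inE; apply/negP => /andP[/andP[sLT _] hL].
by rewrite (subsetP sLT h hL) in hT.
Qed.

Lemma kappa_graphT a b a' b' :
  kappa a b (graphT a' b') = ((p ^ 2)%:Z *+ ((a, b) == (a', b')))%R.
Proof.
have p_gt1 := prime_gt1 p_pr.
have p2_neq1 : (p ^ 2 == 1)%N = false by rewrite -(expn0 p) eqn_exp2l.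
have p2_neqp : (p ^ 2 == p)%N = false by rewrite -[X in _ == X](expn1 p) eqn_exp2l.
rewrite ffunE inE card_graphT p2_neqp andbF.
have -> : (graphT a' b' == 1%G) = false.
  by apply: contraNF (negbT p2_neq1) => /eqP S1; rewrite -(card_graphT a' b') S1 cards1.
have -> : (graphT a' b' == graphT a b) = ((a, b) == (a', b')).
  by apply/eqP/eqP => [/graphT_inj [-> ->] | [-> ->]].
by case: (_ == _); rewrite !mulr0 subr0 addr0 ?mulr1.
Qed.

End ElementaryAbelian.

Theorem mainTheorem16 (p : nat) : prime p -> rank_KGC_eq p (p ^ 2).
Proof.
move=> p_pr; rewrite -(card_GG p_pr).
apply: (@rank_KGC_eq_dual p _ (fun k => graphT k.1 k.2) (fun k => kappa k.1 k.2) (p ^ 2)%:Z).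
- by rewrite eqz_nat expn_eq0 andbT -lt0n prime_gt0.
- by move=> k; split; [apply: kappa_BGC | apply: kappa_RQ].
- by move=> [a b] [a' b']; apply: kappa_graphT.
- by move=> x xK xT; apply: KGC_eq0 => // a b; apply: (xT (a, b)).
Qed.
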